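(* Let $F(X)\in\mathbb{Z}[X]$ be monic irreducible of degree $d$ with fixed root $\xi$, $L=\mathbb{Q}(\xi)$ Galois over $\mathbb{Q}$ with group $G$, and $\{\sigma\xi\}_{\sigma\in G}$ a normal basis of $L$. Let $K_1,\dots,K_r$ be the conjugacy classes of $G$, $\Gamma=[X_{\sigma\tau^{-1}}]_{\sigma,\tau\in G}$, $\partial_\tau=\frac{1}{|G|}\frac{\partial\det\Gamma}{\partial X_\tau}$, and let $\partial_\tau(\xi)$, $\det\Gamma_\xi$ be the values under $X_\sigma\mapsto\sigma\xi$. For $i\ge0$ and $1\le j\le r$ set $$a_{K_j,i}=\frac{1}{\det\Gamma_\xi}\sum_{\sigma\in G}\sum_{\tau\in K_j}\sigma(\xi^i)\,\partial_{\sigma\tau}(\xi).$$ Then $a_{K_j,i}\in\mathbb{Q}$ for all $i\ge0$ and all $j$. *)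

From HB Require Import structures.
From mathcomp Require Import all_boot all_order all_algebra all_fingroup all_field.
From mathcomp Require Import mpoly.
Set Implicit Arguments. Unset Strict Implicit. Unset Printing Implicit Defensive.
Import GRing.Theory.
Local Open Scope ring_scope.

Section Defs.
Variable L : splittingFieldType rat.

Definition galG : {group gal_of {:L}} := 'Gal({:L} / 1)%G.

(* Indexing the variables X_sigma (sigma in G) by 'I_|G|. *)
Definition gidx (s : gal_of {:L}) : 'I_#|galG| := enum_rank_in (group1 galG) s.
Definition gval (i : 'I_#|galG|) : gal_of {:L} := enum_val i.

Definition Gamma : 'M[{mpoly L[#|galG|]}]_#|galG| :=
  \matrix_(i, j) 'X_(gidx (gval i * (gval j)^-1)%g).

Definition dGamma (t : gal_of {:L}) : {mpoly L[#|galG|]} :=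
  (#|galG|%:R)^-1 *: (\det Gamma)^`M(gidx t).

Definition specxi (xi : L) : 'I_#|galG| -> L := fun i => gval i xi.

Definition a_coef (xi : L) (K : {set gal_of {:L}}) (i : nat) : L :=
  ((\det Gamma).@[specxi xi])^-1 *
  \sum_(s in galG) \sum_(t in K) s (xi ^+ i) * (dGamma (s * t)%g).@[specxi xi].
End Defs.

From Pilot Require Import Defs.
From HB Require Import structures.
From mathcomp Require Import all_boot all_order all_algebra all_fingroup all_field.
From mathcomp Require Import mpoly.
Import GRing.Theory.
Local Open Scope ring_scope.

(* Every sigma in G = Gal(L/Q) acts on the specialisation X_tau |-> tau xi by
   the substitution X_tau |-> X_(tau sigma), because sigma (tau xi) = (tau sigma) xi.
   This substitution permutes the columns of Gamma, so it multiplies det Gamma by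
   a sign e, and by the chain rule it sends partial_tau to e * partial_(tau sigma).
   Hence sigma multiplies both det Gamma_xi and the double sum defining a_(K,i) by
   the same sign: in the sum, the shift s |-> s sigma of the outer index is absorbed
   by reindexing, and the conjugation t |-> t^sigma by the invariance of the class K.
   So a_(K,i) is fixed by G, hence rational since L/Q is Galois. *)

Lemma mderivXU n (R : comNzRingType) (i j : 'I_n) :
  ('X_i : {mpoly R[n]})^`M(j) = (i == j)%:R.
Proof.
rewrite mderivX mnm1E; case: eqP => [->|_]; last by rewrite scale0r.
have -> : (U_(j) - U_(j) = 0)%MM by apply/mnmP => k; rewrite mnmBE subnn mnm0E.
by rewrite scale1r mpolyX0.
Qed.

Lemma mderiv_comp_perm n (R : comNzRingType) (s : {perm 'I_n}) (j : 'I_n)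
    (p : {mpoly R[n]}) :
  (p \mPo [tuple 'X_(s i) | i < n])^`M(j)
  = p^`M((s^-1)%g j) \mPo [tuple 'X_(s i) | i < n].
Proof.
set lq := [tuple _ | i < n].
pose Q (q : {mpoly R[n]}) := (q \mPo lq)^`M(j) = q^`M((s^-1)%g j) \mPo lq.
have QD q r : Q q -> Q r -> Q (q + r).
  by rewrite /Q => Hq Hr; rewrite comp_mpolyD !mderivD Hq Hr comp_mpolyD.
have QM q r : Q q -> Q r -> Q (q * r).
  by rewrite /Q => Hq Hr; rewrite rmorphM mderivM Hq Hr mderivM rmorphD !rmorphM.
have QZ c q : Q q -> Q (c *: q).
  by rewrite /Q => Hq; rewrite comp_mpolyZ mderivZ Hq mderivZ comp_mpolyZ.
have Q1 : Q 1 by rewrite /Q rmorph1 -mpolyC1 !mderivC raddf0.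
have QX i : Q 'X_i.
  rewrite /Q comp_mpolyXU -tnth_nth tnth_mktuple !mderivXU.
  rewrite -!mpolyC_nat comp_mpolyC; congr (_%:R%:MP).
  by congr nat_of_bool; apply/eqP/eqP => [<-|->]; rewrite ?permK ?permKV.
have QXm m : Q 'X_[m].
  rewrite mpolyXE_id; apply: (big_ind Q) => // i _.
  by elim: (m i) => [|e IH]; rewrite ?expr0 ?exprS //; apply: QM.
elim/mpolyind: p => [|c m q _ _ Hq]; first by rewrite /Q !raddf0.
by apply: QD => //; apply: QZ.
Qed.

Lemma rmorph_meval n (R S : comNzRingType) (f : {rmorphism R -> S})
    (p : {mpoly R[n]}) (v : 'I_n -> R) :
  f p.@[v] = (map_mpoly f p).@[f \o v].
Proof.
elim/mpolyind: p => [|c m q _ _ IH]; first by rewrite !raddf0.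
rewrite !(mevalD, rmorphD) /= map_mpolyZ map_mpolyX !mevalZ !mevalX rmorphM IH.
by rewrite rmorph_prod; congr (_ * _ + _); apply: eq_bigr => i _; rewrite rmorphXn.
Qed.

Lemma map_mpoly_mderiv n (R S : comNzRingType) (f : {rmorphism R -> S})
    (p : {mpoly R[n]}) (i : 'I_n) :
  map_mpoly f p^`M(i) = (map_mpoly f p)^`M(i).
Proof.
apply/mpolyP => m.
by rewrite mcoeff_map_mpoly !mcoeff_deriv mcoeff_map_mpoly raddfMn.
Qed.

Section GroupMatrix.
Variable L : splittingFieldType rat.
Local Notation n := #|galG L|.
Local Notation gidx := (Defs.gidx (L:=L)).
Local Notation gval := (Defs.gval (L:=L)).

Lemma mem_galG (s : gal_of {:L}) : s \in galG L.
Proof. by rewrite /galG /= gal_kHom ?sub1v // k1AHom. Qed.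

Lemma gvalK : cancel gval gidx.
Proof. by move=> i; rewrite /Defs.gval /Defs.gidx enum_valK_in. Qed.

Lemma gidxK : cancel gidx gval.
Proof. by move=> s; rewrite /Defs.gval /Defs.gidx enum_rankK_in // mem_galG. Qed.

Lemma gidx_conj_inj (f : gal_of {:L} -> gal_of {:L}) :
  injective f -> injective (gidx \o f \o gval).
Proof. by move=> f_inj i j /= /(can_inj gidxK)/f_inj/(can_inj gvalK). Qed.

Definition rmul_idx (g : gal_of {:L}) : {perm 'I_n} :=
  perm (@gidx_conj_inj _ (mulIg g)).

Definition lmulV_idx (g : gal_of {:L}) : {perm 'I_n} :=
  perm (@gidx_conj_inj _ (mulgI (g^-1)%g)).

Lemma rmul_idxE g i : gval (rmul_idx g i) = (gval i * g)%g.
Proof. by rewrite permE /= gidxK. Qed.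

Definition rmul_vars g : n.-tuple {mpoly L[n]} := [tuple 'X_(rmul_idx g i) | i < n].

Lemma map_det_Gamma (f : {rmorphism L -> L}) :
  map_mpoly f (\det (Gamma L)) = \det (Gamma L).
Proof.
rewrite -det_map_mx; congr (\det _); apply/matrixP => i j.
by rewrite !mxE; exact: map_mpolyX.
Qed.

(* X_(s t^-1) |-> X_(s t^-1 g) = X_(s (g^-1 t)^-1): a column permutation. *)
Lemma det_Gamma_rmul g :
  \det (Gamma L) \mPo rmul_vars g = (-1) ^+ lmulV_idx g *: \det (Gamma L).
Proof.
rewrite -det_map_mx.
have -> : map_mx (comp_mpoly (rmul_vars g)) (Gamma L) = col_perm (lmulV_idx g) (Gamma L).
  apply/matrixP => i j; rewrite !mxE comp_mpolyXU -tnth_nth tnth_mktuple.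
  by rewrite !permE /= !gidxK invMg invgK mulgA.
rewrite col_permE det_mulmx det_perm odd_permV mulrC -mul_mpolyC.
by rewrite rmorphXn rmorphN1.
Qed.

Lemma mderiv_det_Gamma_rmul g u :
  (\det (Gamma L))^`M(gidx u) \mPo rmul_vars g
  = (-1) ^+ lmulV_idx g *: (\det (Gamma L))^`M(gidx (u * g)%g).
Proof.
rewrite -{1}(permK (rmul_idx g) (gidx u)) -mderiv_comp_perm -/(rmul_vars g).
by rewrite det_Gamma_rmul mderivZ permE /= gidxK.
Qed.

Lemma gal_meval_specxi (xi : L) (g : gal_of {:L}) (P : {mpoly L[n]}) :
  g P.@[specxi xi] = (map_mpoly g P \mPo rmul_vars g).@[specxi xi].
Proof.
rewrite rmorph_meval comp_mpoly_meval; apply: meval_eq => i /=.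
by rewrite tnth_mktuple mevalXU /specxi rmul_idxE galM ?memvf.
Qed.

Lemma gal_det_Gamma_specxi (xi : L) (g : gal_of {:L}) :
  g (\det (Gamma L)).@[specxi xi]
  = (-1) ^+ lmulV_idx g * (\det (Gamma L)).@[specxi xi].
Proof. by rewrite gal_meval_specxi map_det_Gamma det_Gamma_rmul mevalZ. Qed.

Lemma gal_dGamma_specxi (xi : L) (g u : gal_of {:L}) :
  g (dGamma u).@[specxi xi]
  = (-1) ^+ lmulV_idx g * (dGamma (u * g)%g).@[specxi xi].
Proof.
rewrite gal_meval_specxi /dGamma map_mpolyZ map_mpoly_mderiv map_det_Gamma.
by rewrite comp_mpolyZ mderiv_det_Gamma_rmul fmorphV rmorph_nat !mevalZ mulrCA.
Qed.

Lemma gal_class_sum (xi : L) (K : {set gal_of {:L}}) (i : nat) (g : gal_of {:L}) :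
    K \in classes (galG L) ->
  let S := \sum_(s in galG L) \sum_(t in K)
             s (xi ^+ i) * (dGamma (s * t)%g).@[specxi xi] in
  g S = (-1) ^+ lmulV_idx g * S.
Proof.
case/imsetP=> x _ -> S; rewrite rmorph_sum mulr_sumr /S.
rewrite [RHS](reindex_inj (mulIg g)); apply: eq_big => [s|s _].
  by rewrite !mem_galG.
rewrite rmorph_sum mulr_sumr (reindex_inj (conjg_inj (g^-1)%g)).
apply: eq_big => [t|t _].
  by rewrite memJ_norm // (subsetP (class_norm x _)) ?groupV ?mem_galG.
have -> : (s * t ^ g^-1 = s * g * t * g^-1)%g by rewrite conjgE invgK !mulgA.
by rewrite rmorphM /= galM ?memvf // gal_dGamma_specxi mulgKV mulrCA.
Qed.

Lemma gal_a_coef (xi : L) (K : {set gal_of {:L}}) (i : nat) (g : gal_of {:L}) :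
  K \in classes (galG L) -> g (a_coef xi K i) = a_coef xi K i.
Proof.
move=> /(gal_class_sum xi _ i g) /= gS.
rewrite /a_coef rmorphM fmorphV /= gal_det_Gamma_specxi gS invfM mulrACA.
by rewrite mulVf ?signr_eq0 // mul1r.
Qed.

End GroupMatrix.

Theorem corollary4p5 (L : splittingFieldType rat) (F : {poly int}) (xi : L) :
  F \is monic ->
  irreducible_poly (map_poly intr F : {poly rat}) ->
  root (map_poly intr F) xi ->
  <<1%VS; xi>>%VS = fullv ->
  galois 1%VS {:L} ->
  basis_of fullv (map (fun s : gal_of {:L} => s xi) (enum (galG L))) ->
  forall (K : {set gal_of {:L}}), K \in classes (galG L) ->
  forall i : nat, a_coef xi K i \in 1%VS.
Proof.
move=> _ _ _ _ /galois_fixedField <- _ K HK i.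
apply/fixedFieldP => [|g _]; first exact: memvf.
exact: gal_a_coef.
Qed.
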